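(* Let $I$ be a proper ideal of a monoid $M$. Then $\mathfrak{L}(\mathrm{Val},\mathrm{CF},M)=\mathfrak{L}(\mathrm{Val},\mathrm{CF},M/I)$.
   Context: An ideal of a monoid $M$ is $I\subseteq M$ with $MIM\subseteq I$; it is proper if $I\ne M$. The Rees quotient $M/I$ is the quotient of $M$ by the congruence $a\sim b$ iff $a=b$ or $a,b\in I$; its elements are $I$ and the singletons $\{x\}$, $x\in M\setminus I$, with identity $\{1\}$. A context-free valence grammar over a monoid $N$ is $(V,T,P,S,N)$ with nonterminals $V$, terminals $T$, start symbol $S\in V$ and a finite set $P$ of rules $(A\to\alpha,n)$ with $A\in V$, $\alpha\in(V\cup T)^*$, $n\in N$. One step: $(w_1Aw_2,m)\Rightarrow(w_1\alpha w_2,mn)$ for a rule $(A\to\alpha,n)$. The generated language is $\{w\in T^*:(S,1)\Rightarrow^*(w,1)\}$. $\mathfrak{L}(\mathrm{Val},\mathrm{CF},N)$ is the family of languages generated by context-free valence grammars over $N$. *)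

From Stdlib Require Import List Relations ClassicalDescription.
From mathcomp Require Import ssreflect ssrfun ssrbool eqtype fintype.
Import ListNotations.
Set Implicit Arguments.
Unset Strict Implicit.

Record monoid_ops := MonoidOps {
  carrier :> Type;
  mop : carrier -> carrier -> carrier;
  munit : carrier }.

Definition is_monoid (M : monoid_ops) : Prop :=
  (forall x y z : M, mop x (mop y z) = mop (mop x y) z) /\
  (forall x : M, mop (munit M) x = x) /\
  (forall x : M, mop x (munit M) = x).

Definition is_ideal (M : monoid_ops) (I : M -> Prop) : Prop :=
  forall a x b : M, I x -> I (mop (mop a x) b).

Definition proper_ideal (M : monoid_ops) (I : M -> Prop) : Prop :=
  exists x : M, ~ I x.

(* Rees quotient M/I: the class I is represented by None, the singleton
   {x} (x ∉ I) by Some x. *)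
Definition rees_carrier (M : monoid_ops) (I : M -> Prop) : Type :=
  option {x : M | ~ I x}.

Definition rees_class (M : monoid_ops) (I : M -> Prop) (x : M)
  : rees_carrier I :=
  match excluded_middle_informative (I x) with
  | left _ => None
  | right h => Some (exist (fun y => ~ I y) x h)
  end.

Definition rees_mul (M : monoid_ops) (I : M -> Prop)
  (a b : rees_carrier I) : rees_carrier I :=
  match a, b with
  | Some x, Some y => rees_class I (mop (proj1_sig x) (proj1_sig y))
  | _, _ => None
  end.

Definition rees_quotient (M : monoid_ops) (I : M -> Prop) : monoid_ops :=
  @MonoidOps (rees_carrier I) (@rees_mul M I) (rees_class I (munit M)).

Record valence_grammar (N : monoid_ops) (V T : finType) := VGrammar {
  vg_rules : list (V * list (V + T) * N);
  vg_start : V }.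

Inductive vg_step (N : monoid_ops) (V T : finType) (G : valence_grammar N V T)
  : list (V + T) * N -> list (V + T) * N -> Prop :=
| VGStep : forall (w1 w2 alpha : list (V + T)) (A : V) (m n : N),
    In (A, alpha, n) (vg_rules G) ->
    vg_step G (w1 ++ inl A :: w2, m) (w1 ++ alpha ++ w2, mop m n).

Definition vg_generates (N : monoid_ops) (V T : finType)
  (G : valence_grammar N V T) (w : list T) : Prop :=
  clos_refl_trans _ (vg_step G) ([inl (vg_start G)], munit N)
                                (map inr w, munit N).

Definition in_L_Val_CF (N : monoid_ops) (T : finType) (L : list T -> Prop)
  : Prop :=
  exists (V : finType) (G : valence_grammar N V T),
    forall w, L w <-> vg_generates G w.

(* The class map [x |-> [x]] from M onto M/I is multiplicative and, since a
   proper ideal avoids 1, only 1 is sent to the identity class.  Hence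
   replacing every weight n of a grammar over M by [n] preserves derivations
   and the accepted words.  Conversely, a rule of a grammar over M/I weighted
   by the zero class I can never occur in a derivation reaching the identity,
   because I absorbs everything; dropping such rules and lifting the remaining
   weights {x} to x gives an equivalent grammar over M. *)
From mathcomp Require Import ssreflect ssrfun fintype.
From Stdlib Require Import List Relations ClassicalDescription ProofIrrelevance.
Import ListNotations.

Set Implicit Arguments.
Unset Strict Implicit.

Section ValenceSimulation.

Variables (M N : monoid_ops) (f : M -> N) (z : N).
Hypothesis fM : forall m n, f (mop m n) = mop (f m) (f n).
Hypothesis f1 : f (munit M) = munit N.
Hypothesis f_eq1 : forall m, f m = munit N -> m = munit M.
Hypothesis mul0r : forall c, mop z c = z.
Hypothesis mulr0 : forall c, mop c z = z.
Hypothesis unit_neq0 : munit N <> z.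

Variables (V T : finType) (G1 : valence_grammar M V T)
  (G2 : valence_grammar N V T).
Hypothesis start_eq : vg_start G1 = vg_start G2.
Hypothesis rules_map : forall A al n,
  In (A, al, n) (vg_rules G1) -> In (A, al, f n) (vg_rules G2).
Hypothesis rules_lift : forall A al c, In (A, al, c) (vg_rules G2) ->
  c = z \/ exists2 n, f n = c & In (A, al, n) (vg_rules G1).

Lemma vg_derives_map x y :
  clos_refl_trans _ (vg_step G1) x y ->
  clos_refl_trans _ (vg_step G2) (x.1, f x.2) (y.1, f y.2).
Proof.
elim=> {x y} [_ _ [w1 w2 al A m n hin] | x | x y x' _ hxy _ hyz].
- by apply: rt_step; rewrite /= fM; apply: VGStep; apply: rules_map.
- exact: rt_refl.
- exact: rt_trans hxy hyz.
Qed.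

Lemma vg_derives_lift u m y :
  clos_refl_trans _ (vg_step G2) (u, f m) y ->
  y.2 = z \/ exists2 p, f p = y.2 & clos_refl_trans _ (vg_step G1) (u, m) (y.1, p).
Proof.
move=> hder; apply clos_rt_rtn1 in hder.
elim: hder => {y} [|_ _ [w1 w2 al A c d hin] _ IH].
  by right; exists m; last exact: rt_refl.
case: IH => [/= -> | [p /= fp hder]]; first by left; rewrite mul0r.
case: (rules_lift hin) => [-> | [n fn hin1]]; first by left; rewrite mulr0.
right; exists (mop p n); first by rewrite fM fp fn.
by apply: rt_trans hder _; apply: rt_step; apply: VGStep.
Qed.

Lemma vg_generates_sim w : vg_generates G1 w <-> vg_generates G2 w.
Proof.
rewrite /vg_generates -start_eq; split.
- by move/vg_derives_map; rewrite /= f1.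
- by rewrite -{1}f1 => /vg_derives_lift [/unit_neq0 | [p /= /f_eq1 ->]].
Qed.

End ValenceSimulation.

Section ReesQuotient.

Variables (M : monoid_ops) (I : M -> Prop).
Hypothesis monoidM : is_monoid M.
Hypothesis idealI : is_ideal I.
Hypothesis properI : proper_ideal I.

Lemma ideal_unit_notin : ~ I (munit M).
Proof.
case: properI => x Nx I1; apply: Nx.
have [_ [mul1m mulm1]] := monoidM.
by have := @idealI (munit M) (munit M) x I1; rewrite mulm1 mul1m.
Qed.

Lemma rees_classM m n :
  rees_class I (mop m n) = rees_mul (rees_class I m) (rees_class I n).
Proof.
have [_ [mul1m mulm1]] := monoidM.
rewrite /rees_class.
case: (excluded_middle_informative (I m)) => Im.
  case: excluded_middle_informative => // NImn; case: NImn.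
  by have := @idealI (munit M) m n Im; rewrite mul1m.
case: (excluded_middle_informative (I n)) => In //.
case: excluded_middle_informative => // NImn; case: NImn.
by have := @idealI m n (munit M) In; rewrite mulm1.
Qed.

Lemma rees_class_val (x : {y : M | ~ I y}) : rees_class I (proj1_sig x) = Some x.
Proof.
case: x => x Nx; rewrite /rees_class /=.
case: excluded_middle_informative => [/Nx [] | Nx'].
by rewrite (proof_irrelevance _ Nx' Nx).
Qed.

Lemma rees_class_eq1 m : rees_class I m = rees_class I (munit M) -> m = munit M.
Proof.
rewrite /rees_class.
case: (excluded_middle_informative (I (munit M))) => I1; first by case: ideal_unit_notin.
by case: excluded_middle_informative => // _ [].
Qed.

Lemma rees_class1_neq_None : rees_class I (munit M) <> None.
Proof.
rewrite /rees_class; case: excluded_middle_informative => // I1.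
by case: ideal_unit_notin.
Qed.

Variables (V T : finType).

Definition rees_rule (r : V * list (V + T) * M) :
    V * list (V + T) * rees_quotient I :=
  (r.1.1, r.1.2, rees_class I r.2).

Definition rees_grammar (G : valence_grammar M V T) :
    valence_grammar (rees_quotient I) V T :=
  VGrammar (map rees_rule (vg_rules G)) (vg_start G).

Definition lift_rule (r : V * list (V + T) * rees_quotient I) :
    list (V * list (V + T) * M) :=
  if r.2 is Some x then [(r.1.1, r.1.2, proj1_sig x)] else [].

Definition lift_grammar (G : valence_grammar (rees_quotient I) V T) :
    valence_grammar M V T :=
  VGrammar (flat_map lift_rule (vg_rules G)) (vg_start G).

Lemma rees_vg_generates_sim (G1 : valence_grammar M V T)
    (G2 : valence_grammar (rees_quotient I) V T) :
  vg_start G1 = vg_start G2 ->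
  (forall A al n, In (A, al, n) (vg_rules G1) ->
     In (A, al, rees_class I n) (vg_rules G2)) ->
  (forall A al c, In (A, al, c) (vg_rules G2) ->
     c = None \/ exists2 n, rees_class I n = c & In (A, al, n) (vg_rules G1)) ->
  forall w, vg_generates G1 w <-> vg_generates G2 w.
Proof.
apply: vg_generates_sim => //.
- exact: rees_classM.
- exact: rees_class_eq1.
- by case.
- exact: rees_class1_neq_None.
Qed.

Lemma rees_grammar_generates G w : vg_generates G w <-> vg_generates (rees_grammar G) w.
Proof.
apply: rees_vg_generates_sim => // [A al n hin | A al c].
- exact: (in_map rees_rule _ _ hin).
- by case/in_map_iff=> [[[A' al'] n] [[-> -> <-] hin]]; right; exists n.
Qed.

Lemma lift_grammar_generates G w : vg_generates G w <-> vg_generates (lift_grammar G) w.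
Proof.
symmetry; apply: rees_vg_generates_sim => // [A al n | A al [x|] hin]; last by left.
- case/in_flat_map=> [[[A' al'] [x|]] [hin]] //= [[<- <- <-] | //].
  by rewrite rees_class_val.
- right; exists (proj1_sig x); first exact: rees_class_val.
  by apply/in_flat_map; exists (A, al, Some x); split; last by left.
Qed.

End ReesQuotient.

Theorem proposition3 (M : monoid_ops) (I : M -> Prop) :
  is_monoid M -> is_ideal I -> proper_ideal I ->
  forall (T : finType) (L : list T -> Prop),
    in_L_Val_CF M L <-> in_L_Val_CF (rees_quotient I) L.
Proof.
move=> monoidM idealI properI T L; split=> -[V [G HL]]; exists V.
- exists (rees_grammar I G) => w.
  by rewrite HL; apply: rees_grammar_generates.
- exists (lift_grammar G) => w.
  by rewrite HL; apply: lift_grammar_generates.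
Qed.
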